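(* Let $S$ be a functional PTS specification. For all terms $M,N,A,B$ of the $\lambda\Pi/S$ syntax such that the relevant inverse translations are defined: (1) if $M\equiv_{\beta R}N$ then $\varphi(M)\equiv_\beta\varphi(N)$; (2) if $A\equiv_{\beta R}B$ then $\psi(A)\equiv_\beta\psi(B)$.
   Context: $S=(\mathcal S,\mathcal A,\mathcal R)$ is a PTS specification (sorts, axioms $(s_1:s_2)$, rules $(s_1,s_2,s_3)$). Terms are $s\mid x\mid M\,N\mid\lambda x:A.M\mid\Pi x:A.B$ over constants $u_s,\varepsilon_s$ ($s\in\mathcal S$), $\dot s_1$ ($(s_1:s_2)\in\mathcal A$), $\dot\pi_{s_1s_2s_3}$ ($(s_1,s_2,s_3)\in\mathcal R$). $\longrightarrow_{\beta R}$ is the union of $\beta$-reduction and the contextual closure of the rules $\varepsilon_{s_2}\,\dot s_1\longrightarrow u_{s_1}$ ($(s_1:s_2)\in\mathcal A$) and $\varepsilon_{s_3}(\dot\pi_{s_1s_2s_3}AB)\longrightarrow\Pi x:\varepsilon_{s_1}A.\varepsilon_{s_2}(B\,x)$ ($(s_1,s_2,s_3)\in\mathcal R$); $\equiv_{\beta R}$ is the congruence it generates. Inverse translations (partial): $\varphi(\dot s)=s$, $\varphi(\dot\pi_{s_1s_2s_3})=\lambda\alpha:s_1.\lambda\beta:(\alpha\to s_2).\Pi x:\alpha.\beta\,x$, $\varphi(x)=x$, $\varphi(M\,N)=\varphi(M)\varphi(N)$, $\varphi(\lambda x:A.M)=\lambda x:\psi(A).\varphi(M)$; $\psi(u_s)=s$,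 $\psi(\varepsilon_sM)=\varphi(M)$, $\psi(\Pi x:A.B)=\Pi x:\psi(A).\psi(B)$. *)

From Stdlib Require Import Arith Relations.

Record spec : Type := Spec {
  sort : Type;
  axiom : sort -> sort -> Prop;
  rule : sort -> sort -> sort -> Prop }.

Definition functional (S : spec) : Prop :=
  (forall s1 s2 s2', axiom S s1 s2 -> axiom S s1 s2' -> s2 = s2') /\
  (forall s1 s2 s3 s3', rule S s1 s2 s3 -> rule S s1 s2 s3' -> s3 = s3').

Section Syntax.
Variable St : Type.

Inductive pterm : Type :=
| PSort : St -> pterm
| PVar : nat -> pterm
| PApp : pterm -> pterm -> pterm
| PLam : pterm -> pterm -> pterm
| PPi : pterm -> pterm -> pterm.

Fixpoint plift (c d : nat) (t : pterm) : pterm :=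
  match t with
  | PSort s => PSort s
  | PVar n => if n <? c then PVar n else PVar (n + d)
  | PApp M N => PApp (plift c d M) (plift c d N)
  | PLam A M => PLam (plift c d A) (plift (S c) d M)
  | PPi A B => PPi (plift c d A) (plift (S c) d B)
  end.

Fixpoint psubst (k : nat) (u : pterm) (t : pterm) : pterm :=
  match t with
  | PSort s => PSort s
  | PVar n => match Nat.compare n k with
              | Lt => PVar n
              | Eq => plift 0 k u
              | Gt => PVar (n - 1)
              end
  | PApp M N => PApp (psubst k u M) (psubst k u N)
  | PLam A M => PLam (psubst k u A) (psubst (S k) u M)
  | PPi A B => PPi (psubst k u A) (psubst (S k) u B)
  end.

Inductive pbeta : pterm -> pterm -> Prop :=
| pbeta_redex A M N : pbeta (PApp (PLam A M) N) (psubst 0 N M)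
| pbeta_appl M M' N : pbeta M M' -> pbeta (PApp M N) (PApp M' N)
| pbeta_appr M N N' : pbeta N N' -> pbeta (PApp M N) (PApp M N')
| pbeta_laml A A' M : pbeta A A' -> pbeta (PLam A M) (PLam A' M)
| pbeta_lamr A M M' : pbeta M M' -> pbeta (PLam A M) (PLam A M')
| pbeta_pil A A' B : pbeta A A' -> pbeta (PPi A B) (PPi A' B)
| pbeta_pir A B B' : pbeta B B' -> pbeta (PPi A B) (PPi A B').

Definition pconv : pterm -> pterm -> Prop := clos_refl_sym_trans pterm pbeta.

Inductive lpsort : Type := LType | LKind.

Inductive lconst : Type :=
| CU : St -> lconst
| CEps : St -> lconst
| CDot : St -> lconst
| CDotPi : St -> St -> St -> lconst.

Inductive lterm : Type :=
| LSort : lpsort -> lterm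
| LVar : nat -> lterm
| LConst : lconst -> lterm
| LApp : lterm -> lterm -> lterm
| LLam : lterm -> lterm -> lterm
| LPi : lterm -> lterm -> lterm.

Fixpoint llift (c d : nat) (t : lterm) : lterm :=
  match t with
  | LSort s => LSort s
  | LVar n => if n <? c then LVar n else LVar (n + d)
  | LConst k => LConst k
  | LApp M N => LApp (llift c d M) (llift c d N)
  | LLam A M => LLam (llift c d A) (llift (S c) d M)
  | LPi A B => LPi (llift c d A) (llift (S c) d B)
  end.

Fixpoint lsubst (k : nat) (u : lterm) (t : lterm) : lterm :=
  match t with
  | LSort s => LSort s
  | LVar n => match Nat.compare n k with
              | Lt => LVar n
              | Eq => llift 0 k u
              | Gt => LVar (n - 1)
              end
  | LConst c => LConst c
  | LApp M N => LApp (lsubst k u M) (lsubst k u N)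
  | LLam A M => LLam (lsubst k u A) (lsubst (S k) u M)
  | LPi A B => LPi (lsubst k u A) (lsubst (S k) u B)
  end.

(* phi(dot pi_{s1 s2 s3}) = \alpha:s1. \beta:(alpha -> s2). Pi x:alpha. beta x *)
Definition phi_pi (s1 s2 : St) : pterm :=
  PLam (PSort s1)
    (PLam (PPi (PVar 0) (PSort s2))
       (PPi (PVar 1) (PApp (PVar 1) (PVar 0)))).

Fixpoint phi (t : lterm) : option pterm :=
  match t with
  | LConst (CDot s) => Some (PSort s)
  | LConst (CDotPi s1 s2 _) => Some (phi_pi s1 s2)
  | LVar n => Some (PVar n)
  | LApp M N =>
      match phi M, phi N with
      | Some m, Some n => Some (PApp m n)
      | _, _ => None
      end
  | LLam A M =>
      match psi A, phi M with
      | Some a, Some m => Some (PLam a m)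
      | _, _ => None
      end
  | _ => None
  end
with psi (t : lterm) : option pterm :=
  match t with
  | LConst (CU s) => Some (PSort s)
  | LApp (LConst (CEps _)) M => phi M
  | LPi A B =>
      match psi A, psi B with
      | Some a, Some b => Some (PPi a b)
      | _, _ => None
      end
  | _ => None
  end.

End Syntax.

Arguments PVar {St}.
Arguments LVar {St}.
Arguments LSort {St}.
Arguments LConst {St}.
Arguments LApp {St}.
Arguments LLam {St}.
Arguments LPi {St}.
Arguments PSort {St}.
Arguments PApp {St}.
Arguments PLam {St}.
Arguments PPi {St}.
Arguments CU {St}.
Arguments CEps {St}.
Arguments CDot {St}.
Arguments CDotPi {St}.
Arguments phi {St}.
Arguments pconv {St}.
Arguments pbeta {St}.
Arguments lsubst {St}.
Arguments llift {St}.
Arguments psubst {St}.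
Arguments plift {St}.
Arguments psi {St}.

Section LambdaPiS.
Variable Sp : spec.
Local Notation St := (sort Sp).

Fixpoint wf_lterm (t : lterm St) : Prop :=
  match t with
  | LSort _ | LVar _ => True
  | LConst (CU _) | LConst (CEps _) => True
  | LConst (CDot s1) => exists s2, axiom Sp s1 s2
  | LConst (CDotPi s1 s2 s3) => rule Sp s1 s2 s3
  | LApp M N | LLam M N | LPi M N => wf_lterm M /\ wf_lterm N
  end.

Inductive lstep : lterm St -> lterm St -> Prop :=
| lstep_beta A M N : lstep (LApp (LLam A M) N) (lsubst 0 N M)
| lstep_axiom s1 s2 : axiom Sp s1 s2 ->
    lstep (LApp (LConst (CEps s2)) (LConst (CDot s1))) (LConst (CU s1))
| lstep_rule s1 s2 s3 A B : rule Sp s1 s2 s3 ->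
    lstep (LApp (LConst (CEps s3)) (LApp (LApp (LConst (CDotPi s1 s2 s3)) A) B))
          (LPi (LApp (LConst (CEps s1)) A)
               (LApp (LConst (CEps s2)) (LApp (llift 0 1 B) (LVar 0))))
| lstep_appl M M' N : lstep M M' -> lstep (LApp M N) (LApp M' N)
| lstep_appr M N N' : lstep N N' -> lstep (LApp M N) (LApp M N')
| lstep_laml A A' M : lstep A A' -> lstep (LLam A M) (LLam A' M)
| lstep_lamr A M M' : lstep M M' -> lstep (LLam A M) (LLam A M')
| lstep_pil A A' B : lstep A A' -> lstep (LPi A B) (LPi A' B)
| lstep_pir A B B' : lstep B B' -> lstep (LPi A B) (LPi A B').

Definition lconv : lterm St -> lterm St -> Prop :=
  clos_refl_sym_trans (lterm St)
    (fun M N => wf_lterm M /\ wf_lterm N /\ lstep M N).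

End LambdaPiS.

From Stdlib Require Import Arith Relations Lia.

(** The inverse translations are partial, so we compare them with a total
    translation [ptrans c] that also interprets [u_s] as [s], [eps_s] as the
    identity [\x:s. x] and the lambda-Pi sorts as the variable [c], chosen
    fresh for the term.  Under [ptrans c] a beta-step stays a beta-step and
    both [R]-rules become beta-conversions (the [eps]-redexes are identity
    redexes, and [phi(dot pi) A B] beta-reduces to [Pi x:A. B x]); whenever
    [phi] or [psi] is defined it is beta-convertible to [ptrans c]. *)

Section Translation.
Variable St : Type.

Ltac nat_cases :=
  repeat (cbn -[Nat.compare Nat.ltb Nat.add Nat.sub]; match goal with
  | |- context [?a <? ?b] => destruct (Nat.ltb_spec a b)
  | |- context [Nat.compare ?a ?b] => destruct (Nat.compare_spec a b)
  end); try subst; try (f_equal; lia); try lia.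

Lemma plift_0 (t : pterm St) : forall c, plift c 0 t = t.
Proof.
  induction t; intros c; simpl; try congruence.
  destruct (n <? c); f_equal; lia.
Qed.

Lemma psubst_plift (t : pterm St) : forall k u, psubst k u (plift k 1 t) = t.
Proof. induction t; intros k u; simpl; try congruence; nat_cases. Qed.

Lemma pconv_congr (f : pterm St -> pterm St) :
  (forall x y, pbeta x y -> pbeta (f x) (f y)) ->
  forall x y, pconv x y -> pconv (f x) (f y).
Proof.
  intros Hf x y H; induction H.
  - now apply rst_step, Hf.
  - apply rst_refl.
  - now apply rst_sym.
  - eapply rst_trans; eauto.
Qed.

Lemma pconv_congr2 (f : pterm St -> pterm St -> pterm St) :
  (forall x x' y, pbeta x x' -> pbeta (f x y) (f x' y)) ->
  (forall x y y', pbeta y y' -> pbeta (f x y) (f x y')) ->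
  forall x x' y y', pconv x x' -> pconv y y' -> pconv (f x y) (f x' y').
Proof.
  intros Hl Hr x x' y y' Hx Hy. eapply rst_trans.
  - apply (pconv_congr (fun z => f z y)); [intros; apply Hl; assumption | exact Hx].
  - apply (pconv_congr (f x')); [intros; apply Hr; assumption | exact Hy].
Qed.

Lemma pconv_app (M M' N N' : pterm St) :
  pconv M M' -> pconv N N' -> pconv (PApp M N) (PApp M' N').
Proof. apply pconv_congr2; constructor; assumption. Qed.

Lemma pconv_lam (A A' M M' : pterm St) :
  pconv A A' -> pconv M M' -> pconv (PLam A M) (PLam A' M').
Proof. apply pconv_congr2; constructor; assumption. Qed.

Lemma pconv_pi (A A' B B' : pterm St) :
  pconv A A' -> pconv B B' -> pconv (PPi A B) (PPi A' B').
Proof. apply pconv_congr2; constructor; assumption. Qed.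

Lemma pconv_id_app (s : St) (X : pterm St) :
  pconv (PApp (PLam (PSort s) (PVar 0)) X) X.
Proof.
  apply rst_step.
  generalize (pbeta_redex _ (PSort s) (PVar 0) X); simpl.
  now rewrite plift_0.
Qed.

Lemma pconv_phi_pi_app (s1 s2 : St) (A B : pterm St) :
  pconv (PApp (PApp (phi_pi St s1 s2) A) B)
        (PPi A (PApp (plift 0 1 B) (PVar 0))).
Proof.
  eapply rst_trans; [apply rst_step, pbeta_appl, pbeta_redex|].
  simpl; rewrite plift_0.
  eapply rst_trans; [apply rst_step, pbeta_redex|].
  simpl; rewrite psubst_plift. apply rst_refl.
Qed.

Definition ptrans_const (k : lconst St) : pterm St :=
  match k with
  | CU s | CDot s => PSort s
  | CEps s => PLam (PSort s) (PVar 0)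
  | CDotPi s1 s2 _ => phi_pi St s1 s2
  end.

Fixpoint ptrans (c : nat) (t : lterm St) : pterm St :=
  match t with
  | LSort _ => PVar c
  | LVar n => if n <? c then PVar n else PVar (S n)
  | LConst k => ptrans_const k
  | LApp M N => PApp (ptrans c M) (ptrans c N)
  | LLam A M => PLam (ptrans c A) (ptrans (S c) M)
  | LPi A B => PPi (ptrans c A) (ptrans (S c) B)
  end.

Lemma ptrans_llift t : forall k c d,
  k <= c -> ptrans (c + d) (llift k d t) = plift k d (ptrans c t).
Proof.
  induction t; intros k c d Hk; cbn [ptrans llift plift]; try nat_cases.
  - now destruct l.
  - now rewrite IHt1, IHt2.
  - rewrite IHt1 by lia. f_equal. apply (IHt2 (S k) (S c)); lia.
  - rewrite IHt1 by lia. f_equal. apply (IHt2 (S k) (S c)); lia.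
Qed.

Lemma ptrans_lsubst t : forall k j u,
  ptrans (k + j) (lsubst k u t) = psubst k (ptrans j u) (ptrans (S (k + j)) t).
Proof.
  induction t; intros k j u; cbn [ptrans lsubst psubst].
  - nat_cases.
  - destruct (Nat.compare_spec n k); nat_cases.
    rewrite Nat.add_comm. apply ptrans_llift. lia.
  - now destruct l.
  - now rewrite IHt1, IHt2.
  - rewrite IHt1. f_equal. apply (IHt2 (S k) j).
  - rewrite IHt1. f_equal. apply (IHt2 (S k) j).
Qed.

Fixpoint lclosed (k : nat) (t : lterm St) : Prop :=
  match t with
  | LVar n => n < k
  | LApp M N => lclosed k M /\ lclosed k N
  | LLam A M | LPi A M => lclosed k A /\ lclosed (S k) M
  | _ => True
  end.

Lemma lclosed_le t : forall k k', k <= k' -> lclosed k t -> lclosed k' t.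
Proof.
  induction t; simpl; intros k k' Hk H; try tauto; try lia;
    destruct H; split; eauto.
  all: apply (IHt2 (S k)); auto; lia.
Qed.

Lemma lclosed_exists t : exists k, lclosed k t.
Proof.
  induction t; simpl; try (exists 0; exact I).
  { exists (S n); lia. }
  all: destruct IHt1 as [k1 H1], IHt2 as [k2 H2]; exists (max k1 k2).
  all: split; (eapply lclosed_le; [|eassumption]); lia.
Qed.

Lemma lclosed_exists2 M N : exists k, lclosed k M /\ lclosed k N.
Proof.
  destruct (lclosed_exists M) as [k1 H1], (lclosed_exists N) as [k2 H2].
  exists (max k1 k2); split; (eapply lclosed_le; [|eassumption]); lia.
Qed.

Lemma pconv_ptrans_phi_psi t : forall c, lclosed c t ->
  (forall m, phi t = Some m -> pconv (ptrans c t) m) /\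
  (forall a, psi t = Some a -> pconv (ptrans c t) a).
Proof.
  induction t; intros c Hc; simpl in *; split; intros x Hx; try discriminate.
  - injection Hx as <-. destruct (Nat.ltb_spec n c); [apply rst_refl | lia].
  - destruct l; try discriminate; injection Hx as <-; apply rst_refl.
  - destruct l; try discriminate; injection Hx as <-; apply rst_refl.
  - destruct Hc as [H1 H2].
    destruct (phi t1), (phi t2); try discriminate.
    injection Hx as <-.
    apply pconv_app; [apply (proj1 (IHt1 c H1)) | apply (proj1 (IHt2 c H2))]; reflexivity.
  - destruct t1 as [| |[]| | |]; try discriminate.
    eapply rst_trans; [apply pconv_id_app|]. now apply (proj1 (IHt2 c (proj2 Hc))).
  - destruct Hc as [H1 H2].
    destruct (psi t1), (phi t2); try discriminate.
    injection Hx as <-.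
    apply pconv_lam; [apply (proj2 (IHt1 c H1)) | apply (proj1 (IHt2 (S c) H2))]; reflexivity.
  - destruct Hc as [H1 H2].
    destruct (psi t1), (psi t2); try discriminate.
    injection Hx as <-.
    apply pconv_pi; [apply (proj2 (IHt1 c H1)) | apply (proj2 (IHt2 (S c) H2))]; reflexivity.
Qed.

End Translation.

Lemma pconv_ptrans_lstep (Sp : spec) M N :
  lstep Sp M N -> forall c, pconv (ptrans _ c M) (ptrans _ c N).
Proof.
  induction 1; intros c; simpl.
  4-9: first [apply pconv_app | apply pconv_lam | apply pconv_pi];
    solve [auto | apply rst_refl].
  - apply rst_step. generalize (ptrans_lsubst _ M 0 c N); simpl; intros ->.
    apply pbeta_redex.
  - apply pconv_id_app.
  - eapply rst_trans; [apply pconv_id_app|].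
    rewrite <- Nat.add_1_r, (ptrans_llift _ B 0 c 1) by lia.
    eapply rst_trans; [apply pconv_phi_pi_app|].
    apply rst_sym, pconv_pi; [apply pconv_id_app|].
    eapply rst_trans; [apply pconv_id_app | apply rst_refl].
Qed.

Lemma pconv_ptrans_lconv (Sp : spec) M N :
  lconv Sp M N -> forall c, pconv (ptrans _ c M) (ptrans _ c N).
Proof.
  induction 1 as [x y [_ [_ Hxy]]|x|x y _ IH|x y z _ IH1 _ IH2]; intros c.
  - exact (pconv_ptrans_lstep Sp x y Hxy c).
  - apply rst_refl.
  - apply rst_sym, IH.
  - eapply rst_trans; [apply IH1 | apply IH2].
Qed.

Theorem lemma5p12 (Sp : spec) (Hfun : functional Sp) :
  (forall (M N : lterm (sort Sp)) (m n : pterm (sort Sp)),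
      wf_lterm Sp M -> wf_lterm Sp N -> lconv Sp M N ->
      phi M = Some m -> phi N = Some n -> pconv m n) /\
  (forall (A B : lterm (sort Sp)) (a b : pterm (sort Sp)),
      wf_lterm Sp A -> wf_lterm Sp B -> lconv Sp A B ->
      psi A = Some a -> psi B = Some b -> pconv a b).
Proof.
  split; intros M N m n _ _ HMN Hm Hn;
    destruct (lclosed_exists2 _ M N) as [c [HM HN]];
    pose proof (pconv_ptrans_lconv Sp M N HMN c) as Htrans;
    destruct (pconv_ptrans_phi_psi _ M c HM) as [HphiM HpsiM];
    destruct (pconv_ptrans_phi_psi _ N c HN) as [HphiN HpsiN].
  - eapply rst_trans; [apply rst_sym, HphiM, Hm|].
    eapply rst_trans; [exact Htrans | exact (HphiN n Hn)].
  - eapply rst_trans; [apply rst_sym, HpsiM, Hm|].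
    eapply rst_trans; [exact Htrans | exact (HpsiN n Hn)].
Qed.
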